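(* Let $\gamma:[0,1]\to\mathbb{R}$ be of class $C^3$ on $(0,1]$ and $C^2$ on $[0,1]$, with $\gamma(0)=\gamma'(0)=\gamma''(0)=0$, $\gamma''$ nonnegative and strictly increasing on $[0,1]$, and such that $b=\lim_{t\to0+}\gamma''(t)/(t\gamma'''(t))$ exists in $[0,\infty)$. Let $h(t)=t^2\gamma''(t)$ for $t\in[0,1]$. Then: (i) if $0\le s\le\gamma(1)$, then $s\le h(1)$ and $h^{-1}(s)\le\gamma^{-1}(s)$; (ii) if $0\le s\le h(1/3)$, then $s\le\gamma(1)$ and $\gamma^{-1}(s)\le 3h^{-1}(s)$.
   Context: $h^{-1}$ and $\gamma^{-1}$ denote the inverses of the increasing functions $h$ and $\gamma$ on $[0,1]$. *)

From Stdlib Require Import Reals Lra ClassicalEpsilon.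
From Coquelicot Require Import Coquelicot.
Open Scope R_scope.

Definition I01 (t : R) : Prop := 0 <= t <= 1.
Definition I01oc (t : R) : Prop := 0 < t <= 1.

Definition has_deriv_within (D : R -> Prop) (f : R -> R) (x l : R) : Prop :=
  filterlim (fun y => (f y - f x) / (y - x))
    (within (fun y => D y /\ y <> x) (locally x)) (locally l).

Definition cont_within (D : R -> Prop) (f : R -> R) (x : R) : Prop :=
  filterlim f (within D (locally x)) (locally (f x)).

(* The inverse on [0,1] of a function f: a point t in [0,1] with f t = s
   (unique when f is strictly increasing on [0,1]); default value otherwise. *)
Definition inv01 (f : R -> R) (s : R) : R :=
  epsilon (inhabits 0) (fun t => I01 t /\ f t = s).

(* Two second-order Taylor comparisons drive both parts.  Since g'' is
   increasing and g(0) = g'(0) = 0, on [0,t] we have g'' <= g''(t), whence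
   g(t) <= t^2 g''(t)/2 <= h(t); and on [t,3t] we have g'' >= g''(t), whence
   g(3t) >= g(t) + 2t g'(t) + 2t^2 g''(t) >= h(t).  As g and h are strictly
   increasing on [0,1], these pointwise comparisons invert to the claimed
   comparisons of g^{-1} and h^{-1}. *)

From Stdlib Require Import Reals Lra ClassicalEpsilon.
From Coquelicot Require Import Coquelicot.
Open Scope R_scope.

Definition Icc (a b x : R) : Prop := a <= x <= b.

(* Composing with [clamp a b] turns continuity within [a,b] into continuity on
   all of R, so that the two-sided MVT and IVT of the libraries apply. *)
Definition clamp (a b x : R) : R := Rmax a (Rmin b x).

Lemma clamp_Icc (a b x : R) : a <= b -> Icc a b (clamp a b x).
Proof. intros Hab. unfold Icc, clamp, Rmax, Rmin. repeat destruct Rle_dec; lra. Qed.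

Lemma clamp_id (a b x : R) : Icc a b x -> clamp a b x = x.
Proof. unfold Icc, clamp, Rmax, Rmin. intros Hx. repeat destruct Rle_dec; lra. Qed.

Lemma clamp_lipschitz (a b x y : R) : Rabs (clamp a b y - clamp a b x) <= Rabs (y - x).
Proof.
  unfold clamp, Rmax, Rmin. repeat destruct Rle_dec;
  unfold Rabs; repeat destruct Rcase_abs; lra.
Qed.

Lemma locally_Icc (a b x : R) : a < x < b -> locally x (Icc a b).
Proof.
  intros Hx.
  apply (filter_imp (fun y => a < y /\ y < b)); [unfold Icc; intros; lra|].
  apply (open_and _ _ (open_gt a) (open_lt b)); exact Hx.
Qed.

Lemma cont_within_subset (D E : R -> Prop) (f : R -> R) (x : R) :
  (forall y, E y -> D y) -> cont_within D f x -> cont_within E f x.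
Proof.
  intros HED Hf. apply (filterlim_filter_le_1 _ (F := within D (locally x))); [|exact Hf].
  intros P HP. apply (filter_imp _ _ (fun y H Ey => H (HED y Ey)) HP).
Qed.

Lemma cont_within_of_ex_derive (D : R -> Prop) (f : R -> R) (x : R) :
  ex_derive f x -> cont_within D f x.
Proof.
  intros Hf. apply (filterlim_filter_le_1 _ (filter_le_within _)).
  exact (ex_derive_continuous (V := R_NormedModule) f x Hf).
Qed.

Lemma cont_within_opp (D : R -> Prop) (f : R -> R) (x : R) :
  cont_within D f x -> cont_within D (fun y => - f y) x.
Proof.
  intros Hf. exact (filterlim_comp _ _ _ _ _ _ _ _ Hf (filterlim_opp (V := R_NormedModule) (f x))).
Qed.

Lemma cont_within_minus (D : R -> Prop) (f k : R -> R) (x : R) :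
  cont_within D f x -> cont_within D k x -> cont_within D (fun y => f y - k y) x.
Proof.
  intros Hf Hk.
  exact (filterlim_comp_2 _ _ Rplus Hf (cont_within_opp D k x Hk)
           (filterlim_plus (V := R_NormedModule) _ _)).
Qed.

Lemma cont_within_mult (D : R -> Prop) (f k : R -> R) (x : R) :
  cont_within D f x -> cont_within D k x -> cont_within D (fun y => f y * k y) x.
Proof.
  intros Hf Hk. exact (filterlim_comp_2 _ _ Rmult Hf Hk (filterlim_mult (K := R_AbsRing) _ _)).
Qed.

Lemma cont_within_of_has_deriv_within (D : R -> Prop) (f : R -> R) (x l : R) :
  has_deriv_within D f x l -> cont_within D f x.
Proof.
  intros Hf.
  set (Dx := fun y => D y /\ y <> x).
  assert (Hlin : filterlim (fun y => y - x) (within Dx (locally x)) (locally 0)).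
  { apply (filterlim_filter_le_1 _ (filter_le_within _)).
    replace 0 with (x - x) by ring.
    apply (ex_derive_continuous (fun y => y - x)). auto_derive. exact I. }
  assert (Hprod : filterlim (fun y => f x + (f y - f x) / (y - x) * (y - x))
                    (within Dx (locally x)) (locally (f x + l * 0))).
  { apply (filterlim_comp_2 _ _ Rplus (filterlim_const (f x))
             (filterlim_comp_2 _ _ Rmult Hf Hlin (filterlim_mult (K := R_AbsRing) _ _))
             (filterlim_plus (V := R_NormedModule) _ _)). }
  rewrite Rmult_0_r, Rplus_0_r in Hprod.
  assert (HDx : filterlim f (within Dx (locally x)) (locally (f x))).
  { refine (filterlim_within_ext _ _ _ _ Hprod).
    intros y [_ Hy]. field. lra. }
  apply filterlim_locally. intros eps.
  pose proof (proj1 (filterlim_locally _ _) HDx eps) as Hev.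
  unfold within in Hev |- *. revert Hev. apply filter_imp.
  intros y Hy HDy. destruct (Req_dec y x) as [->|Hne].
  - apply ball_center.
  - apply Hy. split; assumption.
Qed.

Lemma is_derive_of_has_deriv_within (D : R -> Prop) (f : R -> R) (x l : R) :
  locally x D -> has_deriv_within D f x l -> is_derive f x l.
Proof.
  intros HD Hf. apply is_derive_Reals. intros eps Heps.
  pose proof (proj1 (filterlim_locally _ _) Hf (mkposreal eps Heps)) as Hq.
  destruct (filter_and _ _ HD Hq) as [d Hd].
  exists d. intros h Hh0 Hhd.
  assert (Hball : ball x d (x + h)).
  { change (Rabs (x + h - x) < d). replace (x + h - x) with h by ring. exact Hhd. }
  destruct (Hd _ Hball) as [HDy Hy].
  assert (Hne : x + h <> x) by (intros E; apply Hh0; lra).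
  specialize (Hy (conj HDy Hne)).
  change (Rabs ((f (x + h) - f x) / (x + h - x) - l) < eps) in Hy.
  replace (x + h - x) with h in Hy by ring. exact Hy.
Qed.

Lemma continuous_clamp (a b : R) (f : R -> R) (x : R) : a <= b ->
  (forall y, Icc a b y -> cont_within (Icc a b) f y) ->
  continuous (fun y => f (clamp a b y)) x.
Proof.
  intros Hab Hf.
  assert (Hc : filterlim (clamp a b) (locally x) (within (Icc a b) (locally (clamp a b x)))).
  { intros P [eps HP]. exists eps. intros y Hy. apply HP; [|apply clamp_Icc; exact Hab].
    change (Rabs (clamp a b y - clamp a b x) < eps).
    apply (Rle_lt_trans _ _ _ (clamp_lipschitz a b x y)). exact Hy. }
  exact (filterlim_comp _ _ _ _ _ _ _ _ Hc (Hf _ (clamp_Icc a b x Hab))).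
Qed.

Lemma MVT_open (f df : R -> R) (a b : R) : a < b ->
  (forall x, a <= x <= b -> continuity_pt f x) ->
  (forall x, a < x < b -> is_derive f x (df x)) ->
  exists c, a < c < b /\ f b - f a = df c * (b - a).
Proof.
  intros Hab Hc Hd.
  set (pr := fun c (Hc : a < c < b) =>
               exist (fun l => derivable_pt_abs f c l) (df c)
                 (proj1 (is_derive_Reals _ _ _) (Hd c Hc))).
  destruct (MVT f id a b pr (fun c _ => derivable_pt_id c) Hab Hc
              (fun c _ => derivable_continuous_pt _ _ (derivable_pt_id c))) as [c [Hcab E]].
  exists c. split; [exact Hcab|].
  rewrite derive_pt_id in E. simpl in E. unfold id in E. lra.
Qed.

Lemma MVT_within (D : R -> Prop) (f df : R -> R) (a b : R) : a < b ->
  (forall x, Icc a b x -> D x) ->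
  (forall x, Icc a b x -> cont_within D f x) ->
  (forall x, a < x < b -> is_derive f x (df x)) ->
  exists c, a < c < b /\ f b - f a = df c * (b - a).
Proof.
  intros Hab HD Hc Hd.
  set (F := fun y => f (clamp a b y)).
  assert (HF : forall y, Icc a b y -> F y = f y).
  { intros y Hy. unfold F. rewrite clamp_id; auto. }
  destruct (MVT_open F df a b Hab) as [c [Hcab E]].
  - intros x _. apply continuity_pt_filterlim, continuous_clamp; [lra|].
    intros y Hy. apply (cont_within_subset D); auto.
  - intros x Hx. apply (is_derive_ext_loc f); [|apply Hd; exact Hx].
    apply (filter_imp (Icc a b)); [intros y Hy; symmetry; auto|].
    apply locally_Icc; exact Hx.
  - exists c. split; [exact Hcab|].
    rewrite <- !HF; [exact E | unfold Icc; lra | unfold Icc; lra].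
Qed.

Lemma le_of_derive_nonneg (D : R -> Prop) (f df : R -> R) (a b : R) : a <= b ->
  (forall x, Icc a b x -> D x) ->
  (forall x, Icc a b x -> cont_within D f x) ->
  (forall x, a < x < b -> is_derive f x (df x)) ->
  (forall x, a < x < b -> 0 <= df x) -> f a <= f b.
Proof.
  intros Hab HD Hc Hd Hpos. destruct (Req_dec a b) as [<-|Hne]; [lra|].
  destruct (MVT_within D f df a b) as [c [Hcab E]]; auto; [lra|].
  assert (0 <= df c) by (apply Hpos; exact Hcab). nra.
Qed.

Lemma lt_of_derive_pos (D : R -> Prop) (f df : R -> R) (a b : R) : a < b ->
  (forall x, Icc a b x -> D x) ->
  (forall x, Icc a b x -> cont_within D f x) ->
  (forall x, a < x < b -> is_derive f x (df x)) ->
  (forall x, a < x < b -> 0 < df x) -> f a < f b.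
Proof.
  intros Hab HD Hc Hd Hpos.
  destruct (MVT_within D f df a b) as [c [Hcab E]]; auto.
  assert (0 < df c) by (apply Hpos; exact Hcab). nra.
Qed.

Lemma taylor2_le (D : R -> Prop) (f f1 f2 : R -> R) (a b c : R) : a <= b ->
  (forall x, Icc a b x -> D x) ->
  (forall x, Icc a b x -> cont_within D f x) ->
  (forall x, Icc a b x -> cont_within D f1 x) ->
  (forall x, a < x < b -> is_derive f x (f1 x)) ->
  (forall x, a < x < b -> is_derive f1 x (f2 x)) ->
  (forall x, a < x < b -> f2 x <= c) ->
  f b <= f a + f1 a * (b - a) + c / 2 * (b - a) ^ 2.
Proof.
  intros Hab HD Hf Hf1 Hdf Hdf1 Hf2.
  assert (Hslope : forall u, Icc a b u -> f1 u <= f1 a + c * (u - a)).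
  { intros u Hu. unfold Icc in Hu.
    cut (f1 a + c * (a - a) - f1 a <= f1 a + c * (u - a) - f1 u); [lra|].
    apply (le_of_derive_nonneg D (fun y => f1 a + c * (y - a) - f1 y) (fun y => c - f2 y));
      [lra | ..].
    - intros x Hx; apply HD; unfold Icc in *; lra.
    - intros x Hx. apply cont_within_minus; [|apply Hf1; unfold Icc in *; lra].
      apply cont_within_of_ex_derive. auto_derive. exact I.
    - intros x Hx. apply (is_derive_minus (fun y => f1 a + c * (y - a)) f1);
        [auto_derive; [exact I | ring] | apply Hdf1; lra].
    - intros x Hx. assert (f2 x <= c) by (apply Hf2; lra). lra. }
  cut (f a + f1 a * (a - a) + c / 2 * (a - a) ^ 2 - f a
       <= f a + f1 a * (b - a) + c / 2 * (b - a) ^ 2 - f b); [lra|].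
  apply (le_of_derive_nonneg D (fun y => f a + f1 a * (y - a) + c / 2 * (y - a) ^ 2 - f y)
           (fun y => f1 a + c * (y - a) - f1 y)); [lra | exact HD | ..].
  - intros x Hx. apply cont_within_minus; [|apply Hf; exact Hx].
    apply cont_within_of_ex_derive. auto_derive. exact I.
  - intros x Hx. apply (is_derive_minus (fun y => f a + f1 a * (y - a) + c / 2 * (y - a) ^ 2) f);
      [auto_derive; [exact I | field] | apply Hdf; exact Hx].
  - intros x Hx. assert (f1 x <= f1 a + c * (x - a)) by (apply Hslope; unfold Icc; lra). lra.
Qed.

Lemma taylor2_ge (D : R -> Prop) (f f1 f2 : R -> R) (a b c : R) : a <= b ->
  (forall x, Icc a b x -> D x) ->
  (forall x, Icc a b x -> cont_within D f x) ->
  (forall x, Icc a b x -> cont_within D f1 x) ->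
  (forall x, a < x < b -> is_derive f x (f1 x)) ->
  (forall x, a < x < b -> is_derive f1 x (f2 x)) ->
  (forall x, a < x < b -> c <= f2 x) ->
  f a + f1 a * (b - a) + c / 2 * (b - a) ^ 2 <= f b.
Proof.
  intros Hab HD Hf Hf1 Hdf Hdf1 Hf2.
  cut (- f b <= - f a + - f1 a * (b - a) + - c / 2 * (b - a) ^ 2); [lra|].
  apply (taylor2_le D (fun x => - f x) (fun x => - f1 x) (fun x => - f2 x)); auto.
  - intros x Hx. apply cont_within_opp, Hf, Hx.
  - intros x Hx. apply cont_within_opp, Hf1, Hx.
  - intros x Hx. apply (is_derive_opp f), Hdf, Hx.
  - intros x Hx. apply (is_derive_opp f1), Hdf1, Hx.
  - intros x Hx. assert (c <= f2 x) by (apply Hf2, Hx). lra.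
Qed.

Definition strict_incr01 (f : R -> R) : Prop :=
  forall x y, 0 <= x -> x < y -> y <= 1 -> f x < f y.

Lemma strict_incr01_le_inv (f : R -> R) (x y : R) :
  strict_incr01 f -> I01 x -> I01 y -> f x <= f y -> x <= y.
Proof.
  intros Hf Hx Hy Hxy. unfold I01 in *. apply Rnot_lt_le. intros Hlt.
  assert (f y < f x) by (apply Hf; lra). lra.
Qed.

Lemma inv01_spec (f : R -> R) (s : R) :
  (forall t, I01 t -> cont_within I01 f t) -> f 0 <= s <= f 1 ->
  I01 (inv01 f s) /\ f (inv01 f s) = s.
Proof.
  intros Hf Hs. unfold inv01. apply epsilon_spec.
  set (F := fun y => f (clamp 0 1 y)).
  assert (HF : forall y, I01 y -> F y = f y) by (intros y Hy; unfold F; rewrite clamp_id; auto).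
  destruct (IVT_gen F 0 1 s) as [t [Ht Et]].
  - intros x. apply continuity_pt_filterlim, continuous_clamp; [lra | exact Hf].
  - rewrite !HF by (unfold I01; lra). rewrite Rmin_left, Rmax_right; lra.
  - rewrite Rmin_left, Rmax_right in Ht by lra.
    exists t. split; [exact Ht | rewrite <- HF; assumption].
Qed.

Section Profile.

Variables g g1 g2 : R -> R.
Hypothesis Hg1 : forall t, I01 t -> has_deriv_within I01 g t (g1 t).
Hypothesis Hg2 : forall t, I01 t -> has_deriv_within I01 g1 t (g2 t).
Hypothesis g_0 : g 0 = 0.
Hypothesis g1_0 : g1 0 = 0.
Hypothesis g2_0 : g2 0 = 0.
Hypothesis g2_incr : strict_incr01 g2.

Lemma g_cont (t : R) : I01 t -> cont_within I01 g t.
Proof. intros Ht. exact (cont_within_of_has_deriv_within _ _ _ _ (Hg1 t Ht)). Qed.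

Lemma g1_cont (t : R) : I01 t -> cont_within I01 g1 t.
Proof. intros Ht. exact (cont_within_of_has_deriv_within _ _ _ _ (Hg2 t Ht)). Qed.

Lemma g_derive (t : R) : 0 < t < 1 -> is_derive g t (g1 t).
Proof.
  intros Ht. apply (is_derive_of_has_deriv_within I01); [exact (locally_Icc 0 1 t Ht)|].
  apply Hg1. unfold I01; lra.
Qed.

Lemma g1_derive (t : R) : 0 < t < 1 -> is_derive g1 t (g2 t).
Proof.
  intros Ht. apply (is_derive_of_has_deriv_within I01); [exact (locally_Icc 0 1 t Ht)|].
  apply Hg2. unfold I01; lra.
Qed.

Lemma g2_nonneg (t : R) : I01 t -> 0 <= g2 t.
Proof.
  intros [Ht0 Ht1]. destruct (Req_dec t 0) as [->|Hne]; [lra|].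
  rewrite <- g2_0. apply Rlt_le, g2_incr; lra.
Qed.

Lemma g1_incr : strict_incr01 g1.
Proof.
  intros x y Hx Hxy Hy. apply (lt_of_derive_pos I01 g1 g2); auto.
  - intros u Hu. unfold Icc, I01 in *. lra.
  - intros u Hu. apply g1_cont. unfold Icc, I01 in *. lra.
  - intros u Hu. apply g1_derive. lra.
  - intros u Hu. rewrite <- g2_0. apply g2_incr; lra.
Qed.

Lemma g1_nonneg (t : R) : I01 t -> 0 <= g1 t.
Proof.
  intros [Ht0 Ht1]. destruct (Req_dec t 0) as [->|Hne]; [lra|].
  rewrite <- g1_0. apply Rlt_le, g1_incr; lra.
Qed.

Lemma g_incr : strict_incr01 g.
Proof.
  intros x y Hx Hxy Hy. apply (lt_of_derive_pos I01 g g1); auto.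
  - intros u Hu. unfold Icc, I01 in *. lra.
  - intros u Hu. apply g_cont. unfold Icc, I01 in *. lra.
  - intros u Hu. apply g_derive. lra.
  - intros u Hu. rewrite <- g1_0. apply g1_incr; lra.
Qed.

Lemma g_nonneg (t : R) : I01 t -> 0 <= g t.
Proof.
  intros [Ht0 Ht1]. destruct (Req_dec t 0) as [->|Hne]; [lra|].
  rewrite <- g_0. apply Rlt_le, g_incr; lra.
Qed.

Lemma h_incr : strict_incr01 (fun t => t ^ 2 * g2 t).
Proof.
  intros x y Hx Hxy Hy.
  assert (0 <= g2 x) by (apply g2_nonneg; unfold I01; lra).
  assert (g2 x < g2 y) by (apply g2_incr; lra).
  assert (x ^ 2 * g2 x <= x ^ 2 * g2 y) by (apply Rmult_le_compat_l; nra).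
  assert (x ^ 2 < y ^ 2) by nra. nra.
Qed.

Lemma g_le_h (t : R) : I01 t -> g t <= t ^ 2 * g2 t.
Proof.
  intros Ht. pose proof (g2_nonneg t Ht) as Hc. unfold I01 in Ht.
  assert (Htaylor : g t <= g 0 + g1 0 * (t - 0) + g2 t / 2 * (t - 0) ^ 2).
  { apply (taylor2_le I01 g g1 g2); try lra.
    - intros u Hu. unfold Icc, I01 in *. lra.
    - intros u Hu. apply g_cont. unfold Icc, I01 in *. lra.
    - intros u Hu. apply g1_cont. unfold Icc, I01 in *. lra.
    - intros u Hu. apply g_derive. lra.
    - intros u Hu. apply g1_derive. lra.
    - intros u Hu. apply Rlt_le, g2_incr; lra. }
  rewrite g_0, g1_0 in Htaylor. nra.
Qed.

Lemma h_le_g_triple (t : R) : 0 <= t <= 1/3 -> t ^ 2 * g2 t <= g (3 * t).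
Proof.
  intros Ht. assert (Ht01 : I01 t) by (unfold I01; lra).
  pose proof (g_nonneg t Ht01). pose proof (g1_nonneg t Ht01). pose proof (g2_nonneg t Ht01).
  assert (g t + g1 t * (3 * t - t) + g2 t / 2 * (3 * t - t) ^ 2 <= g (3 * t)).
  { apply (taylor2_ge I01 g g1 g2); try lra.
    - intros u Hu. unfold Icc, I01 in *. lra.
    - intros u Hu. apply g_cont. unfold Icc, I01 in *. lra.
    - intros u Hu. apply g1_cont. unfold Icc, I01 in *. lra.
    - intros u Hu. apply g_derive. lra.
    - intros u Hu. apply g1_derive. lra.
    - intros u Hu. apply Rlt_le, g2_incr; lra. }
  nra.
Qed.

End Profile.

Theorem lemma4p3 (g g1 g2 g3 : R -> R)
  (Hg1 : forall t, I01 t -> has_deriv_within I01 g t (g1 t))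
  (Hg2 : forall t, I01 t -> has_deriv_within I01 g1 t (g2 t))
  (Hg2c : forall t, I01 t -> cont_within I01 g2 t)
  (Hg3 : forall t, I01oc t -> has_deriv_within I01oc g2 t (g3 t))
  (Hg3c : forall t, I01oc t -> cont_within I01oc g3 t)
  (H0 : g 0 = 0) (H10 : g1 0 = 0) (H20 : g2 0 = 0)
  (Hnn : forall t, I01 t -> 0 <= g2 t)
  (Hinc : forall x y, 0 <= x -> x < y -> y <= 1 -> g2 x < g2 y)
  (Hb : exists b : R, 0 <= b /\
          at_right 0 (fun t => t * g3 t <> 0) /\
          filterlim (fun t => g2 t / (t * g3 t)) (at_right 0) (locally b)) :
  let h := fun t => t ^ 2 * g2 t in
  (forall s, 0 <= s <= g 1 -> s <= h 1 /\ inv01 h s <= inv01 g s) /\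
  (forall s, 0 <= s <= h (1/3) -> s <= g 1 /\ inv01 g s <= 3 * inv01 h s).
Proof.
  intros h.
  pose proof (g_incr g g1 g2 Hg1 Hg2 H10 H20 Hinc) as g_incr.
  pose proof (h_incr g2 H20 Hinc) as h_incr.
  pose proof (g_le_h g g1 g2 Hg1 Hg2 H0 H10 H20 Hinc) as g_le_h.
  pose proof (h_le_g_triple g g1 g2 Hg1 Hg2 H0 H10 H20 Hinc) as h_le_g_triple.
  assert (inv_g : forall s, 0 <= s <= g 1 -> I01 (inv01 g s) /\ g (inv01 g s) = s).
  { intros s Hs. apply inv01_spec; [exact (g_cont g g1 Hg1) | lra]. }
  assert (inv_h : forall s, 0 <= s <= h 1 -> I01 (inv01 h s) /\ h (inv01 h s) = s).
  { intros s Hs. apply inv01_spec; [|unfold h at 1; lra].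
    intros t Ht. apply cont_within_mult; [|exact (Hg2c t Ht)].
    apply cont_within_of_ex_derive. auto_derive. exact I. }
  assert (g_le_h_1 : g 1 <= h 1) by (apply g_le_h; unfold I01; lra).
  assert (h_third_le_g_1 : h (1/3) <= g 1).
  { replace 1 with (3 * (1/3)) at 2 by field. apply h_le_g_triple. lra. }
  split; intros s Hs.
  - destruct (inv_g s Hs) as [Iu Gu]. destruct (inv_h s ltac:(lra)) as [Iv Hv].
    split; [lra|]. apply (strict_incr01_le_inv h); auto.
    rewrite Hv, <- Gu at 1. apply g_le_h, Iu.
  - assert (h (1/3) <= h 1) by (apply Rlt_le, h_incr; lra).
    destruct (inv_g s ltac:(lra)) as [Iu Gu]. destruct (inv_h s ltac:(lra)) as [Iv Hv].
    assert (Hv3 : inv01 h s <= 1/3) by (apply (strict_incr01_le_inv h); auto; unfold I01; lra).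
    split; [lra|]. unfold I01 in Iv. apply (strict_incr01_le_inv g); auto; [unfold I01; lra|].
    rewrite Gu, <- Hv at 1. apply h_le_g_triple. lra.
Qed.
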